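(* Let $f$ and $g$ be Boolean functions with $var(f)\cap var(g)=\emptyset$, and let $a$ be a truth assignment to a superset of $var(f)\cup var(g)$. Then $\textit{SR}(f\wedge g,a)=\{t\wedge t'\mid t\in\textit{SR}(f,a),\ t'\in\textit{SR}(g,a)\}$.
   Context: A term is a conjunction of literals; $t$ is an implicant of $f$ if $t\models f$, and a prime implicant if no term obtained from $t$ by deleting one literal is an implicant of $f$. $var(f)$ is the set of variables of $f$. For a Boolean function $f$ and an assignment $a$ to a superset of $var(f)$, $\textit{SR}(f,a)$ denotes the set of prime implicants of $f$ that are satisfied by $a$ (the sufficient reasons for $a$ given $f$ when $a$ satisfies $f$). *)

From mathcomp Require Import all_boot.
Set Implicit Arguments. Unset Strict Implicit. Unset Printing Implicit Defensive.

(* Variables range over a finite type V; a (total) truth assignment is a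
   finite function V -> bool; a Boolean function is a predicate on assignments. *)
Definition assignment (V : finType) := {ffun V -> bool}.

(* A literal (v, b) asserts v = b; a term (conjunction of literals) is a
   finite set of literals. *)
Definition term (V : finType) := {set V * bool}.

Definition sat_term (V : finType) (t : term V) (a : assignment V) : bool :=
  [forall l in t, a l.1 == l.2].

Definition implicant (V : finType) (f : assignment V -> bool) (t : term V) : bool :=
  [forall a : assignment V, sat_term t a ==> f a].

Definition prime_implicant (V : finType) (f : assignment V -> bool) (t : term V) : bool :=
  implicant f t && [forall l in t, ~~ implicant f (t :\ l)].

Definition SR (V : finType) (f : assignment V -> bool) (a : assignment V) : {set term V} :=
  [set t : term V | prime_implicant f t && sat_term t a].

Definition flip (V : finType) (a : assignment V) (v : V) : assignment V :=
  [ffun w => if w == v then ~~ a w else a w].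

Definition vars (V : finType) (f : assignment V -> bool) : {set V} :=
  [set v | [exists a : assignment V, f a != f (flip a v)]].

From mathcomp Require Import all_boot.
Set Implicit Arguments. Unset Strict Implicit. Unset Printing Implicit Defensive.

(* Assignments agreeing on [vars f] give [f] the same value.  Hence a term
   satisfied by [a] is an implicant of [f] iff its literals over [vars f] form
   one, and a prime implicant of [f] satisfied by [a] only mentions variables
   of [f].  Since [vars (f && g)] lies in [vars f :|: vars g], a prime
   implicant of [f && g] is the union of its parts over [vars f] and over
   [vars g]; when these variable sets are disjoint, dropping a literal of one
   part leaves the other untouched, so primality for [f && g] amounts to
   primality of each part. *)

Section SufficientReasons.
Variable V : finType.
Implicit Types (f g : assignment V -> bool) (s t : term V) (a b c : assignment V).

Lemma in_SR f a t :
  (t \in SR f a) = [&& sat_term t a, implicant f t & [forall l in t, ~~ implicant f (t :\ l)]].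
Proof. by rewrite inE andbC. Qed.

Lemma eq_SR f g a : f =1 g -> SR f a = SR g a.
Proof.
move=> fg; have eq_impl : implicant f =1 implicant g.
  by move=> t; apply: eq_forallb => b; rewrite fg.
by apply/setP => t; rewrite !in_SR eq_impl; under eq_forallb do rewrite eq_impl.
Qed.

Lemma sat_termS s t a : s \subset t -> sat_term t a -> sat_term s a.
Proof.
move=> /subsetP st /forall_inP ta; apply/forall_inP => l /st; exact: ta.
Qed.

Lemma sat_termU s t a : sat_term (s :|: t) a = sat_term s a && sat_term t a.
Proof.
apply/idP/andP => [st | [/forall_inP sa /forall_inP ta]].
  by split; apply: sat_termS st; rewrite ?subsetUl ?subsetUr.
by apply/forall_inP => l; rewrite in_setU => /orP[/sa | /ta].
Qed.

Lemma implicantS f s t : s \subset t -> implicant f s -> implicant f t.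
Proof.
move=> st /forallP fs; apply/forallP => b; apply/implyP => /(sat_termS st).
exact/implyP.
Qed.

Lemma implicant_andb f g t :
  implicant (fun x => f x && g x) t = implicant f t && implicant g t.
Proof.
apply/forallP/andP => [fgt | [/forallP ft /forallP gt] b].
  by split; apply/forallP => b; apply/implyP => /(implyP (fgt b)) /andP[].
by apply/implyP => tb; rewrite (implyP (ft b) tb) (implyP (gt b) tb).
Qed.

Lemma flip_notin_vars f b v : v \notin vars f -> f (flip b v) = f b.
Proof. by rewrite inE negb_exists => /forallP /(_ b); rewrite negbK => /eqP. Qed.

Lemma eq_on_vars f b c : {in vars f, b =1 c} -> f b = f c.
Proof.
(* Flip the disagreements of [b] and [c] one at a time. *)
have [n] := ubnP #|[set v | b v != c v]|.
elim: n b => // n IHn b; rewrite ltnS => le_n bc.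
have [/setP diff0 | /set0Pn[v]] := eqVneq [set v | b v != c v] set0.
  by congr f; apply/ffunP => v; move: (diff0 v); rewrite !inE => /negbFE/eqP.
rewrite inE => bcv.
have vNf : v \notin vars f by apply: contra bcv => /bc/eqP.
rewrite -(flip_notin_vars b vNf); apply: IHn => [|w wf].
  have -> : [set w | flip b v w != c w] = [set w | b w != c w] :\ v.
    apply/setP => w; rewrite !inE /flip ffunE; case: (w =P v) => [-> | _] //=.
    by move: bcv; case: (b v); case: (c v).
  by move: le_n; rewrite (cardsD1 v) inE bcv.
rewrite /flip ffunE; case: eqP => [evw | _]; last exact: bc.
by rewrite -evw wf in vNf.
Qed.

Lemma vars_andb f g : vars (fun x => f x && g x) \subset vars f :|: vars g.
Proof.
apply/subsetP => v; apply: contraLR; rewrite in_setU negb_or => /andP[vf vg].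
rewrite inE negb_exists; apply/forallP => b.
by rewrite (flip_notin_vars b vf) (flip_notin_vars b vg) eqxx.
Qed.

Definition restrict (S : {set V}) t : term V := [set l in t | l.1 \in S].

Lemma mem_restrict S t l : (l \in restrict S t) = (l \in t) && (l.1 \in S).
Proof. by rewrite inE. Qed.

Lemma restrict_subset S t : restrict S t \subset t.
Proof. by apply/subsetP => l; rewrite mem_restrict => /andP[]. Qed.

Lemma restrictD1 S t l : restrict S (t :\ l) = restrict S t :\ l.
Proof. by apply/setP => k; rewrite !inE andbA. Qed.

Lemma implicant_restrict_vars f t a :
  sat_term t a -> implicant f (restrict (vars f) t) = implicant f t.
Proof.
move=> /forall_inP ta; apply/idP/idP; first exact/implicantS/restrict_subset.
move=> /forallP ft; apply/forallP => b; apply/implyP => /forall_inP tb.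
pose c : assignment V := [ffun w => if w \in vars f then b w else a w].
have -> : f b = f c by apply: eq_on_vars => v vf; rewrite ffunE vf.
apply: (implyP (ft c)); apply/forall_inP => l lt; rewrite ffunE.
by case: ifP => lf; [apply: tb; rewrite mem_restrict lt lf | apply: ta].
Qed.

Lemma implicantD1_notin_vars f t a l :
  sat_term t a -> l.1 \notin vars f -> implicant f (t :\ l) = implicant f t.
Proof.
move=> ta lf; have tla : sat_term (t :\ l) a by apply: sat_termS ta; apply: subsetDl.
rewrite -(implicant_restrict_vars f ta) -(implicant_restrict_vars f tla) restrictD1.
congr implicant; apply/setP => k; rewrite !inE.
by case: (k =P l) => [-> | //]; move: lf; rewrite inE => /negbTE ->; rewrite andbF.
Qed.

Lemma SR_sat f a t : t \in SR f a -> sat_term t a.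
Proof. by rewrite in_SR => /andP[]. Qed.

Lemma SR_vars f a t l : t \in SR f a -> l \in t -> l.1 \in vars f.
Proof.
rewrite in_SR => /and3P[ta ft /forall_inP prime_t] lt.
apply: contraT => lf; move: (prime_t l lt).
by rewrite (implicantD1_notin_vars ta lf) ft.
Qed.

Lemma SR_andb_cover f g a t :
  t \in SR (fun x => f x && g x) a -> t = restrict (vars f) t :|: restrict (vars g) t.
Proof.
move=> t_SR; apply/setP => l; rewrite in_setU !mem_restrict -andb_orr -in_setU.
case lt: (l \in t) => //=; symmetry.
exact: subsetP (vars_andb f g) _ (SR_vars t_SR lt).
Qed.

Section DisjointVariables.
Variables (f g : assignment V -> bool) (a : assignment V).
Hypothesis fg_disjoint : [disjoint vars f & vars g].

Lemma SR_restrict_andb t :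
  t \in SR (fun x => f x && g x) a -> restrict (vars f) t \in SR f a.
Proof.
rewrite !in_SR implicant_andb => /and3P[ta /andP[ft gt] /forall_inP prime_t].
rewrite (sat_termS (restrict_subset _ _) ta) (implicant_restrict_vars f ta) ft /=.
apply/forall_inP => l; rewrite mem_restrict => /andP[lt lf].
have tla : sat_term (t :\ l) a by apply: sat_termS ta; apply: subsetDl.
move: (prime_t l lt); rewrite implicant_andb.
rewrite (implicantD1_notin_vars ta (negbT (disjointFr fg_disjoint lf))) gt andbT.
by rewrite -(implicant_restrict_vars f tla) restrictD1.
Qed.

Lemma restrict_SR_union tf tg :
  tf \in SR f a -> tg \in SR g a -> restrict (vars f) (tf :|: tg) = tf.
Proof.
move=> tf_SR tg_SR; apply/setP => l; rewrite mem_restrict in_setU.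
case lf: (l \in tf); first by rewrite (SR_vars tf_SR lf).
case lg: (l \in tg) => //=.
by rewrite (disjointFl fg_disjoint (SR_vars tg_SR lg)).
Qed.

Lemma SR_union_minimal tf tg l :
  tf \in SR f a -> tg \in SR g a -> l \in tf -> ~~ implicant f ((tf :|: tg) :\ l).
Proof.
move=> tf_SR tg_SR lf.
have tfga : sat_term ((tf :|: tg) :\ l) a.
  by apply: sat_termS (subsetDl _ _) _; rewrite sat_termU (SR_sat tf_SR) (SR_sat tg_SR).
rewrite -(implicant_restrict_vars f tfga) restrictD1 (restrict_SR_union tf_SR tg_SR).
by move: tf_SR; rewrite in_SR => /and3P[_ _ /forall_inP]; apply.
Qed.

End DisjointVariables.

Lemma SR_union_andb f g a tf tg : [disjoint vars f & vars g] ->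
  tf \in SR f a -> tg \in SR g a -> tf :|: tg \in SR (fun x => f x && g x) a.
Proof.
move=> fg_disjoint tf_SR tg_SR.
have gf_disjoint : [disjoint vars g & vars f] by rewrite disjoint_sym.
move: (tf_SR) (tg_SR); rewrite !in_SR => /and3P[tfa ftf _] /and3P[tga gtg _].
rewrite sat_termU tfa tga implicant_andb.
rewrite (implicantS (subsetUl tf tg) ftf) (implicantS (subsetUr tf tg) gtg) /=.
apply/forall_inP => l; rewrite in_setU implicant_andb negb_and => /orP[lf | lg].
  by rewrite (SR_union_minimal fg_disjoint tf_SR tg_SR lf).
by rewrite setUC (SR_union_minimal gf_disjoint tg_SR tf_SR lg) orbT.
Qed.

End SufficientReasons.

Theorem proposition14 (V : finType) (f g : assignment V -> bool) (a : assignment V) :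
  [disjoint vars f & vars g] ->
  SR (fun x => f x && g x) a = [set t :|: t' | t in SR f a, t' in SR g a].
Proof.
move=> fg_disjoint; apply/setP => t.
apply/idP/imset2P => [t_SR | [tf tg tf_SR tg_SR ->]]; last exact: SR_union_andb.
have gf_disjoint : [disjoint vars g & vars f] by rewrite disjoint_sym.
have t_SR' : t \in SR (fun x => g x && f x) a.
  by rewrite (@eq_SR _ _ (fun x => f x && g x)) // => x; apply: andbC.
exists (restrict (vars f) t) (restrict (vars g) t).
- exact: (SR_restrict_andb fg_disjoint t_SR).
- exact: (SR_restrict_andb gf_disjoint t_SR').
- exact: (SR_andb_cover t_SR).
Qed.
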